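(* Let $q\in\mathbb{R}$. For all $A,B\in M_2(\mathbb{C})$ with $\operatorname{tr}A=0$, $$\|AB-qBA\|_F^2\le (1+q^2)\,\|A\|_F^2\,\|B\|_F^2 .$$ The bound is sharp: for every $q$ there are $A,B\in M_2(\mathbb{C})$ with $\operatorname{tr}A=0$ and $B\neq0$ attaining equality.
   Context: $\|X\|_F=\sqrt{\operatorname{tr}(XX^\dagger)}$ denotes the Frobenius norm. *)

From HB Require Import structures.
From mathcomp Require Import all_boot all_order all_algebra.
From mathcomp.real_closed Require Import complex.
Set Implicit Arguments. Unset Strict Implicit. Unset Printing Implicit Defensive.
Import Order.TTheory GRing.Theory Num.Theory.
Local Open Scope ring_scope.

Definition adjmx (R : rcfType) (m n : nat) (X : 'M[R[i]]_(m, n)) : 'M[R[i]]_(n, m) :=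
  \matrix_(i < n, j < m) conjc (X j i).

(* Frobenius norm ||X||_F = sqrt(tr(X X^dagger)); tr(X X^dagger) is a
   nonnegative real number, we take its real part to land in R. *)
Definition frob (R : rcfType) (n : nat) (X : 'M[R[i]]_n) : R :=
  Num.sqrt (complex.Re (\tr (X *m adjmx X))).

(* For traceless 2 x 2 matrices [A] the identity
     (1 + q^2) |A|^2 |B|^2 = |AB - qBA|^2 + |A^* B + q B A^*|^2
   holds (a polynomial identity in the entries once [A 1 1 = - A 0 0]); dropping
   the second term gives the bound.  Equality therefore holds exactly when
   [A^* B + q B A^* = 0], e.g. for [A = E_01] and [B = diag(-q, 1)]. *)

From mathcomp Require Import all_boot all_order all_algebra.
From mathcomp.real_closed Require Import complex.
From mathcomp Require Import ring.
Import Order.TTheory GRing.Theory Num.Theory.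

Set Implicit Arguments.
Unset Strict Implicit.
Unset Printing Implicit Defensive.

Local Open Scope ring_scope.
Local Open Scope complex_scope.

Section Frobenius.
Variables (R : rcfType) (n : nat).
Implicit Types X : 'M[R[i]]_n.

Lemma mxtrace_mul_adjmx X : \tr (X *m adjmx X) = \sum_i \sum_j X i j * (X i j)^*.
Proof. by apply: eq_bigr => i _; rewrite !mxE; apply: eq_bigr => j _; rewrite mxE. Qed.

Lemma mxtrace_mul_adjmx_ge0 X : 0 <= \tr (X *m adjmx X).
Proof.
by rewrite mxtrace_mul_adjmx; do 2![apply: sumr_ge0 => ? _]; apply: mulcJ_ge0.
Qed.

Lemma frob_sqrE X : (frob X ^+ 2)%:C = \tr (X *m adjmx X).
Proof.
have := mxtrace_mul_adjmx_ge0 X; rewrite lecE /frob.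
by case: (\tr _) => a b /= /andP[/eqP -> a_ge0]; rewrite sqr_sqrtr.
Qed.

Lemma frob0 : frob (0 : 'M[R[i]]_n) = 0.
Proof.
by apply/eqP; rewrite -sqrf_eq0 -(inj_eq (@complexI _)) frob_sqrE mul0mx mxtrace0.
Qed.

End Frobenius.

(* Indices are written [lift ord0 ord0] rather than [1] because that is what
   [big_ord_recl] produces, so [ring] sees the same atoms on both sides. *)
Lemma mxtrace_mul_adjmx2 (R : rcfType) (X : 'M[R[i]]_2) :
  \tr (X *m adjmx X) =
  X ord0 ord0 * (X ord0 ord0)^* + X ord0 (lift ord0 ord0) * (X ord0 (lift ord0 ord0))^* +
  (X (lift ord0 ord0) ord0 * (X (lift ord0 ord0) ord0)^* +
   X (lift ord0 ord0) (lift ord0 ord0) * (X (lift ord0 ord0) (lift ord0 ord0))^*).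
Proof. by rewrite mxtrace_mul_adjmx !big_ord_recl !big_ord0 !addr0. Qed.

(* The [rmorph*] lemmas leave [conjc] as its bundled morphism; this folds it
   back so that [conjc_real] and [conjcK] apply. *)
Lemma conjc_rmorphE (R : rcfType) (x : R[i]) : (conjc : {rmorphism R[i] -> R[i]}) x = x^*.
Proof. by []. Qed.

Lemma frob_qcommutator_identity (R : rcfType) (q : R) (A B : 'M[R[i]]_2) :
  \tr A = 0 ->
  (1 + q ^+ 2) * frob A ^+ 2 * frob B ^+ 2 =
  frob (A *m B - q%:C *: (B *m A)) ^+ 2 + frob (adjmx A *m B + q%:C *: (B *m adjmx A)) ^+ 2.
Proof.
rewrite /mxtrace !big_ord_recl big_ord0 addr0 => /eqP; rewrite addr_eq0 => /eqP trA.
suff key : (1 + q ^+ 2)%:C * \tr (A *m adjmx A) * \tr (B *m adjmx B) =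
    \tr ((A *m B - q%:C *: (B *m A)) *m adjmx (A *m B - q%:C *: (B *m A))) +
    \tr ((adjmx A *m B + q%:C *: (B *m adjmx A)) *m
         adjmx (adjmx A *m B + q%:C *: (B *m adjmx A))).
  by move: key; rewrite -!frob_sqrE -!rmorphM -rmorphD; apply: complexI.
have -> : (1 + q ^+ 2)%:C = 1 + q%:C ^+ 2 :> R[i] by rewrite rmorphD rmorph1 rmorphXn.
rewrite !mxtrace_mul_adjmx2 /adjmx !mxE !big_ord_recl !big_ord0 !mxE trA.
rewrite !(rmorphD, rmorphN, rmorphM) !conjc_rmorphE ?conjc_real ?conjcK.
ring.
Qed.

Lemma adjmx_delta (R : rcfType) m n (i : 'I_m) (j : 'I_n) :
  adjmx (delta_mx i j : 'M[R[i]]_(m, n)) = delta_mx j i.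
Proof. by apply/matrixP => k l; rewrite !mxE conjc_nat andbC. Qed.

Lemma delta_mx_diag_commutator (R : comPzRingType) n (i j : 'I_n) (c : R) (d : 'rV[R]_n) :
  delta_mx i j *m diag_mx d + c *: (diag_mx d *m delta_mx i j) =
  (d 0 j + c * d 0 i) *: delta_mx i j.
Proof.
apply/matrixP => k l; rewrite mul_mx_diag mul_diag_mx !mxE.
by case: (eqVneq k i) => [->|_]; case: (eqVneq l j) => [->|_] /=; ring.
Qed.

Theorem proposition3 (R : rcfType) (q : R) :
  (forall A B : 'M[R[i]]_2, \tr A = 0 ->
     frob (A *m B - (q%:C)%C *: (B *m A)) ^+ 2
       <= (1 + q ^+ 2) * frob A ^+ 2 * frob B ^+ 2)
  /\
  (exists A B : 'M[R[i]]_2, [/\ \tr A = 0, B != 0 &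
     frob (A *m B - (q%:C)%C *: (B *m A)) ^+ 2
       = (1 + q ^+ 2) * frob A ^+ 2 * frob B ^+ 2]).
Proof.
split=> [A B trA | ].
  by rewrite (frob_qcommutator_identity q B trA) lerDl sqr_ge0.
pose d : 'rV[R[i]]_2 := \row_j [:: - q%:C; 1]`_j.
have trA : \tr (delta_mx 0 1 : 'M[R[i]]_2) = 0.
  by rewrite /mxtrace !big_ord_recl big_ord0 !mxE /= !addr0.
exists (delta_mx 0 1), (diag_mx d); split => //.
  by apply/eqP => /matrixP/(_ 1 1); rewrite !mxE /= => /eqP; rewrite oner_eq0.
rewrite frob_qcommutator_identity // adjmx_delta delta_mx_diag_commutator.
by rewrite !mxE /= mulr1 addNr scale0r frob0 expr0n addr0.
Qed.
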